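(* Assume: (i) there is $L_f>0$ with $\|f(w,t)-f(y,t)\|_2\le L_f\|w-y\|_2$ for all $w,y\in\mathbb{R}^{N_s}$, $t\in[0,T]$; (ii) $\Delta t<\sigma_{\min}(A_{LM})/(L_f\sigma_{\max}(B_{LM}))$; (iii) there is $P>0$ with $\|\bar A\,\bar r(w)\|_2\ge P\|\bar r(w)\|_2$ for all $w\in\mathcal{S}$. Let $x\in\mathbb{R}^{N_sN_t}$ satisfy $\bar r(x)=0$ (the full-order solution) and let $\tilde x\in\arg\min_{w\in\mathcal{S}}\|\bar A\,\bar r(w)\|_2$ (the ST-LSPG solution). Then $$\|x-\tilde x\|_2\le\frac1P\,\frac{\sigma_{\max}(\bar A A_{LM})+\Delta t L_f\sigma_{\max}(\bar A B_{LM})}{\sigma_{\min}(A_{LM})-\Delta t L_f\sigma_{\max}(B_{LM})}\,\min_{w\in\mathcal{S}}\|x-w\|_2.$$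
   Context: Let $f:\mathbb{R}^{N_s}\times[0,T]\to\mathbb{R}^{N_s}$ be the velocity of the ODE $\dot x=f(x,t)$, $x(0)=x^0\in\mathbb{R}^{N_s}$. Use a uniform time grid $t^n=n\Delta t$, $n=0,\dots,N_t$, $\Delta t=T/N_t$. A linear multistep scheme is given by integers $k(n)\le n$ and coefficients $\alpha_j^n,\beta_j^n\in\mathbb{R}$, $j=0,\dots,k(n)$, $n=1,\dots,N_t$, with $\alpha_0^n\neq0$. For $w=(w^1,\dots,w^{N_t})\in\mathbb{R}^{N_sN_t}$ (blocks $w^n\in\mathbb{R}^{N_s}$) set $w^0:=x^0$ and define the residual at step $n$ by $r^n(w)=\sum_{j=0}^{k(n)}\alpha_j^n w^{n-j}-\Delta t\sum_{j=0}^{k(n)}\beta_j^n f(w^{n-j},t^{n-j})$, and the space–time residual $\bar r(w)=(r^1(w),\dots,r^{N_t}(w))\in\mathbb{R}^{N_sN_t}$. Let $A_{LM},B_{LM}\in\mathbb{R}^{N_sN_t\times N_sN_t}$ be the block lower-triangular matrices (blocks of size $N_s\times N_s$) whose $(n,n-j)$ block is $\alpha_j^n I_{N_s}$, resp. $\beta_j^n I_{N_s}$, for $0\le j\le k(n)$ with $n-j\ge1$, and zero otherwise. $\sigma_{\max}(M)$, $\sigma_{\min}(M)$ denote the largest and smallest singular values of $M$; $\|\cdot\|_2$ is the Euclidean norm on $\mathbb{R}^{N_sN_t}$. The space–time trial subspace is the affine subspace $\mathcal{S}=\{(x^0,\dots,x^0)+\sum_{i=1}^{n_{st}}c_i\pi_i: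 c\in\mathbb{R}^{n_{st}}\}\subseteq\mathbb{R}^{N_sN_t}$ for given vectors $\pi_1,\dots,\pi_{n_{st}}\in\mathbb{R}^{N_sN_t}$; $\bar A\in\mathbb{R}^{\bar z\times N_sN_t}$ is a weighting matrix. *)

From HB Require Import structures.
From mathcomp Require Import all_boot all_order all_algebra.
Set Implicit Arguments. Unset Strict Implicit. Unset Printing Implicit Defensive.
Import Order.TTheory GRing.Theory Num.Theory.
Local Open Scope ring_scope.

Section Defs.
Variable R : rcfType.

Definition norm2 m (v : 'cV[R]_m) : R := Num.sqrt (\sum_(i < m) v i 0 ^+ 2).

(* nat-indexed access to a column vector (0 outside range) *)
Definition vget m (v : 'cV[R]_m) (i : nat) : R :=
  match (insub i : option 'I_m) with Some i' => v i' 0 | None => 0 end.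

Definition is_sigma_max m n (M : 'M[R]_(m, n)) (s : R) : Prop :=
  0 <= s /\ eigenvalue (M^T *m M) (s ^+ 2) /\
  forall l, eigenvalue (M^T *m M) l -> l <= s ^+ 2.

Definition is_sigma_min n (M : 'M[R]_n) (s : R) : Prop :=
  0 <= s /\ eigenvalue (M^T *m M) (s ^+ 2) /\
  forall l, eigenvalue (M^T *m M) l -> s ^+ 2 <= l.

Variables (Ns Nt : nat).

(* Space-time vectors live in 'cV_(Nt * Ns); block n (1 <= n <= Nt) occupies
   indices (n-1)*Ns, ..., (n-1)*Ns + Ns - 1.  Block 0 is the initial state x0. *)
Definition blk (x0 : 'cV[R]_Ns) (w : 'cV[R]_(Nt * Ns)) (n : nat) : 'cV[R]_Ns :=
  if n is n'.+1 then \col_(a < Ns) vget w (n' * Ns + a) else x0.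

(* residual at step n:  sum_j alpha_j^n w^{n-j} - dt sum_j beta_j^n f(w^{n-j}, t^{n-j}),
   with alpha n j = alpha_j^n, beta n j = beta_j^n, t^m = m * dt *)
Definition resid (f : 'cV[R]_Ns -> R -> 'cV[R]_Ns) (dt : R) (k : nat -> nat)
  (alpha beta : nat -> nat -> R) (x0 : 'cV[R]_Ns) (w : 'cV[R]_(Nt * Ns)) (n : nat)
  : 'cV[R]_Ns :=
  \sum_(j < (k n).+1)
     (alpha n j *: blk x0 w (n - j)
      - (dt * beta n j) *: f (blk x0 w (n - j)) ((n - j)%:R * dt)).

Definition rbar f dt k alpha beta x0 (w : 'cV[R]_(Nt * Ns)) : 'cV[R]_(Nt * Ns) :=
  \col_(p < Nt * Ns) vget (resid f dt k alpha beta x0 w (p %/ Ns).+1) (p %% Ns).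

(* block lower-triangular matrix whose (n, n-j) block is c n j * I_Ns for
   0 <= j <= k n, n - j >= 1; zero otherwise *)
Definition LMmat (k : nat -> nat) (c : nat -> nat -> R) : 'M[R]_(Nt * Ns) :=
  \matrix_(p < Nt * Ns, q < Nt * Ns)
    let n := (p %/ Ns).+1 in let m := (q %/ Ns).+1 in
    if [&& p %% Ns == q %% Ns, m <= n & n - m <= k n]%N then c n (n - m)%N else 0.

Definition x0rep (x0 : 'cV[R]_Ns) : 'cV[R]_(Nt * Ns) :=
  \col_(p < Nt * Ns) vget x0 (p %% Ns).

Definition inS nst (x0 : 'cV[R]_Ns) (Pi : 'M[R]_(Nt * Ns, nst)) (w : 'cV[R]_(Nt * Ns))
  : Prop := exists c : 'cV[R]_nst, w = x0rep x0 + Pi *m c.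

End Defs.

(* Since the full-order residual vanishes, r(w) = r(w) - r(x), and in a
   difference of residuals the initial-state terms cancel:
   r(x) - r(w) = A_LM (x - w) - dt B_LM (F(x) - F(w)) with F the stacked
   velocity, which is L_f-Lipschitz.  Singular-value bounds then give
   (sigma_min(A_LM) - dt L_f sigma_max(B_LM)) |x - w| <= |r(w)| and
   |Abar r(w)| <= (sigma_max(Abar A_LM) + dt L_f sigma_max(Abar B_LM)) |x - w|,
   and the chain P |r(xt)| <= |Abar r(xt)| <= |Abar r(wst)| closes the
   argument.  The singular-value bounds come from the spectral theorem for the
   complexification of M^T M. *)

From HB Require Import structures.
From mathcomp Require Import all_boot all_order all_algebra.
From mathcomp Require Import complex.
From mathcomp Require Import ring lra zify.
Import Order.TTheory GRing.Theory Num.Theory.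
Set Implicit Arguments. Unset Strict Implicit.
Local Open Scope ring_scope.

Section EuclideanNorm.
Variable R : rcfType.
Implicit Types (m : nat) (a : R).

Definition dot m (u v : 'cV[R]_m) : R := \sum_i u i 0 * v i 0.

Lemma dotC m (u v : 'cV[R]_m) : dot u v = dot v u.
Proof. by apply: eq_bigr => i _; rewrite mulrC. Qed.

Lemma dotDl m (u v w : 'cV[R]_m) : dot (u + v) w = dot u w + dot v w.
Proof. by rewrite /dot -big_split; apply: eq_bigr => i _; rewrite mxE mulrDl. Qed.

Lemma dotZl m a (u w : 'cV[R]_m) : dot (a *: u) w = a * dot u w.
Proof. by rewrite /dot mulr_sumr; apply: eq_bigr => i _; rewrite mxE mulrA. Qed.

Lemma dot_ge0 m (u : 'cV[R]_m) : 0 <= dot u u.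
Proof. by apply: sumr_ge0 => i _; rewrite -expr2 sqr_ge0. Qed.

Lemma dot_trmx m (u v : 'cV[R]_m) : (u^T *m v) 0 0 = dot u v.
Proof. by rewrite mxE; apply: eq_bigr => i _; rewrite mxE. Qed.

Lemma norm2E m (u : 'cV[R]_m) : norm2 u = Num.sqrt (dot u u).
Proof. by rewrite /norm2 /dot; congr Num.sqrt; apply: eq_bigr => i _; rewrite expr2. Qed.

Lemma norm2_ge0 m (u : 'cV[R]_m) : 0 <= norm2 u.
Proof. by rewrite norm2E sqrtr_ge0. Qed.

Lemma norm2_sqr m (u : 'cV[R]_m) : norm2 u ^+ 2 = dot u u.
Proof. by rewrite norm2E sqr_sqrtr // dot_ge0. Qed.

(* Lagrange's identity: the defect in Cauchy-Schwarz is a sum of squares. *)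
Lemma dot_sqr_le m (u v : 'cV[R]_m) : dot u v ^+ 2 <= dot u u * dot v v.
Proof.
pose a i := u i 0; pose b i := v i 0.
have lagrange : \sum_i \sum_j (a i * b j - a j * b i) ^+ 2 =
                2%:R * (dot u u * dot v v - dot u v ^+ 2).
  have uuvv : dot u u * dot v v = \sum_i \sum_j (a i * a i) * (b j * b j).
    by rewrite /dot mulr_suml; apply: eq_bigr => i _; rewrite mulr_sumr.
  have uv2 : dot u v ^+ 2 = \sum_i \sum_j (a i * b i) * (a j * b j).
    by rewrite expr2 /dot mulr_suml; apply: eq_bigr => i _; rewrite mulr_sumr.
  have vvuu : \sum_i \sum_j (a i * a i) * (b j * b j) =
              \sum_i \sum_j (a j * a j) * (b i * b i) by rewrite exchange_big.
  have expand : \sum_i \sum_j (a i * b j - a j * b i) ^+ 2 =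
      \sum_i \sum_j (a i * a i) * (b j * b j) + \sum_i \sum_j (a j * a j) * (b i * b i)
      - 2%:R * \sum_i \sum_j (a i * b i) * (a j * b j).
    rewrite -big_split /= mulr_sumr -sumrB; apply: eq_bigr => i _.
    by rewrite -big_split /= mulr_sumr -sumrB; apply: eq_bigr => j _; ring.
  by rewrite expand -vvuu -uuvv -uv2; ring.
have : 0 <= \sum_i \sum_j (a i * b j - a j * b i) ^+ 2.
  by apply: sumr_ge0 => i _; apply: sumr_ge0 => j _; apply: sqr_ge0.
by rewrite lagrange pmulr_rge0 ?ltr0n // subr_ge0.
Qed.

Lemma dot_le_norm2 m (u v : 'cV[R]_m) : dot u v <= norm2 u * norm2 v.
Proof.
have uv_ge0 : 0 <= norm2 u * norm2 v by rewrite mulr_ge0 ?norm2_ge0.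
have [le0|gt0] := lerP (dot u v) 0; first exact: le_trans le0 uv_ge0.
rewrite -(ler_pXn2r (_ : 0 < 2)%N) ?nnegrE ?(ltW gt0) //.
by rewrite exprMn !norm2_sqr dot_sqr_le.
Qed.

Lemma ler_norm2D m (u v : 'cV[R]_m) : norm2 (u + v) <= norm2 u + norm2 v.
Proof.
rewrite -(ler_pXn2r (_ : 0 < 2)%N) ?nnegrE ?addr_ge0 ?norm2_ge0 //.
rewrite norm2_sqr !dotDl ![dot _ (u + v)]dotC !dotDl sqrrD !norm2_sqr.
have := dot_le_norm2 u v; rewrite [dot v u]dotC; lra.
Qed.

Lemma norm2Z m a (u : 'cV[R]_m) : norm2 (a *: u) = `|a| * norm2 u.
Proof.
rewrite !norm2E dotZl dotC dotZl mulrA -expr2 sqrtrM ?sqr_ge0 //.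
by rewrite sqrtr_sqr.
Qed.

Lemma norm2N m (u : 'cV[R]_m) : norm2 (- u) = norm2 u.
Proof. by rewrite -scaleN1r norm2Z normrN normr1 mul1r. Qed.

Lemma lerB_norm2_dist m (u v : 'cV[R]_m) : norm2 u - norm2 v <= norm2 (u - v).
Proof. by have := ler_norm2D (u - v) v; rewrite subrK; lra. Qed.

End EuclideanNorm.

Section RealSpectral.
Local Open Scope sesquilinear_scope.
Variables (R : rcfType) (n : nat) (S : 'M[R]_n).
Hypothesis S_sym : S^T = S.
Local Notation C := (real_complex R).
Local Notation SC := (map_mx C S).
Local Notation P := (spectralmx SC).
Local Notation D := (spectral_diag SC).

Lemma complexified_hermsym : SC \is hermsymmx.
Proof.
apply: realsym_hermsym; last by apply/mxOverP => i j; rewrite mxE complex_real.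
rewrite is_hermitianmxE /= expr0 scale1r.
by apply/eqP/matrixP => i j; rewrite !mxE -[in LHS]S_sym mxE.
Qed.

Lemma spectral_diag_real i : D 0 i = C (complex.Re (D 0 i)).
Proof.
rewrite RRe_real //.
by move/mxOverP: (hermitian_spectral_diag_real complexified_hermsym); apply.
Qed.

Lemma spectralmx_mul_adj : P *m P^t* = 1%:M.
Proof. by apply/unitarymxP; apply: spectral_unitarymx. Qed.

Lemma complexified_spectral : SC = invmx P *m diag_mx D *m P.
Proof. exact/orthomx_spectralP/hermitian_normalmx/complexified_hermsym. Qed.

Lemma eigenvalue_spectral_diag i : eigenvalue S (complex.Re (D 0 i)).
Proof.
rewrite eigenvalue_root_char -(fmorph_root C) map_char_poly.
set t := (X in root _ X).
have -> : t = D 0 i by rewrite /t; symmetry; exact: spectral_diag_real.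
rewrite -eigenvalue_root_char; apply/eigenvalueP; exists (row i P).
  have PS : P *m SC = diag_mx D *m P.
    rewrite [X in P *m X]complexified_spectral !mulmxA mulmxV ?mul1mx //.
    exact/unitarymx_unit/spectral_unitarymx.
  by rewrite -row_mul PS mul_diag_mx; apply/rowP => j; rewrite !mxE.
apply/negP => /eqP row0; have := congr1 (row i) spectralmx_mul_adj.
rewrite row_mul row0 mul0mx => /rowP /(_ i); rewrite !mxE eqxx /= => /eqP.
by rewrite eq_sym oner_eq0.
Qed.

(* Diagonalising the complexification of S by the unitary P writes the
   quadratic form of S as a combination of its eigenvalues with the nonnegative
   weights |(P v) i|^2, which sum to v^T v. *)
Lemma sym_quadform_decomp (v : 'cV[R]_n) : exists c : 'I_n -> R,
  [/\ forall i, 0 <= c i, (v^T *m v) 0 0 = \sum_i c i &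
      (v^T *m S *m v) 0 0 = \sum_i complex.Re (D 0 i) * c i].
Proof.
set vC := map_mx C v; set w := P *m vC.
pose c i := complex.Re (`|w i 0| ^+ 2).
have cE i : C (c i) = `|w i 0| ^+ 2 by rewrite /c RRe_real // ger0_real // exprn_ge0.
have vCT : vC^T = w^t* *m P.
  have vC_real : vC^t* = vC^T.
    by apply/matrixP => i j; rewrite !mxE conj_Creal // complex_real.
  rewrite -vC_real /w trmx_mul map_mxM -mulmxA.
  by rewrite [P^t* *m P]mulmx1C ?mulmx1 // spectralmx_mul_adj.
exists c; split.
- by move=> i; rewrite -ler0c cE exprn_ge0.
- apply: complexI.
  have -> : C ((v^T *m v) 0 0) = (vC^T *m vC) 0 0.
    by rewrite /vC map_trmx -map_mxM [in RHS]mxE.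
  rewrite vCT -mulmxA -/w mxE rmorph_sum /=; apply: eq_bigr => j _.
  by rewrite cE normCKC !mxE.
apply: complexI.
have -> : C ((v^T *m S *m v) 0 0) = (vC^T *m SC *m vC) 0 0.
  by rewrite /vC map_trmx -!map_mxM [in RHS]mxE.
rewrite vCT [X in _ *m X *m vC]complexified_spectral.
rewrite invmx_unitary ?spectral_unitarymx // !mulmxA.
rewrite -(mulmxA (w^t*) P) spectralmx_mul_adj mulmx1 -mulmxA -/w.
rewrite mxE rmorph_sum /=; apply: eq_bigr => j _.
have CM : C (complex.Re (D 0 j) * c j) = C (complex.Re (D 0 j)) * C (c j).
  exact: rmorphM.
by rewrite mul_mx_diag mxE CM cE -spectral_diag_real normCKC !mxE mulrA
           [_ * D 0 j]mulrC.
Qed.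

End RealSpectral.

Section SingularValueBounds.
Variable R : rcfType.

Lemma norm2_mulmx_sqr m n (M : 'M[R]_(m, n)) v :
  norm2 (M *m v) ^+ 2 = (v^T *m (M^T *m M) *m v) 0 0.
Proof. by rewrite norm2_sqr -dot_trmx trmx_mul !mulmxA. Qed.

Lemma norm2_mulmx_le m n (M : 'M[R]_(m, n)) s v :
  is_sigma_max M s -> norm2 (M *m v) <= s * norm2 v.
Proof.
move=> [s_ge0 [_ eig_le]].
have MtM_sym : (M^T *m M)^T = M^T *m M by rewrite trmx_mul trmxK.
have [c [c_ge0 vv vSv]] := sym_quadform_decomp MtM_sym v.
rewrite -(ler_pXn2r (_ : 0 < 2)%N) ?nnegrE ?mulr_ge0 ?norm2_ge0 //.
rewrite norm2_mulmx_sqr exprMn norm2_sqr -dot_trmx vSv vv mulr_sumr.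
by apply: ler_sum => i _; rewrite ler_wpM2r // eig_le // eigenvalue_spectral_diag.
Qed.

Lemma norm2_mulmx_ge n (M : 'M[R]_n) s v :
  is_sigma_min M s -> s * norm2 v <= norm2 (M *m v).
Proof.
move=> [s_ge0 [_ le_eig]].
have MtM_sym : (M^T *m M)^T = M^T *m M by rewrite trmx_mul trmxK.
have [c [c_ge0 vv vSv]] := sym_quadform_decomp MtM_sym v.
rewrite -(ler_pXn2r (_ : 0 < 2)%N) ?nnegrE ?mulr_ge0 ?norm2_ge0 //.
rewrite norm2_mulmx_sqr exprMn norm2_sqr -dot_trmx vSv vv mulr_sumr.
by apply: ler_sum => i _; rewrite ler_wpM2r // le_eig // eigenvalue_spectral_diag.
Qed.

End SingularValueBounds.

Section NatIndexing.
Variable R : rcfType.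

Lemma vgetE m (v : 'cV[R]_m) (i : 'I_m) : vget v i = v i 0.
Proof. by rewrite /vget valK. Qed.

Lemma vget_oob m (v : 'cV[R]_m) i : (m <= i)%N -> vget v i = 0.
Proof. by move=> h; rewrite /vget insubF // ltnNge h. Qed.

Lemma vget_col m (g : nat -> R) i : (i < m)%N -> vget (\col_(p < m) g p) i = g i.
Proof. by move=> h; have -> : i = Ordinal h by []; rewrite vgetE mxE. Qed.

Lemma vgetB m (u v : 'cV[R]_m) i : vget (u - v) i = vget u i - vget v i.
Proof.
case: (ltnP i m) => h; last by rewrite !vget_oob // subr0.
by have -> : i = Ordinal h by []; rewrite !vgetE !mxE.
Qed.

Lemma vgetZ m a (u : 'cV[R]_m) i : vget (a *: u) i = a * vget u i.
Proof.
case: (ltnP i m) => h; last by rewrite !vget_oob // mulr0.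
by have -> : i = Ordinal h by []; rewrite !vgetE mxE.
Qed.

Lemma vget_sum m I (r : seq I) (P : pred I) (F : I -> 'cV[R]_m) i :
  vget (\sum_(j <- r | P j) F j) i = \sum_(j <- r | P j) vget (F j) i.
Proof.
case: (ltnP i m) => h; last by rewrite vget_oob // big1 // => j _; rewrite vget_oob.
have -> : i = Ordinal h by []; rewrite vgetE summxE.
by apply: eq_bigr => j _; rewrite vgetE.
Qed.

End NatIndexing.

Section Blocks.
Variables (R : rcfType) (Ns Nt : nat).

Lemma divn_modn_block m b : (b < Ns)%N ->
  ((m * Ns + b) %/ Ns = m /\ (m * Ns + b) %% Ns = b)%N.
Proof.
move=> hb; have Ns_gt0 : (0 < Ns)%N by apply: leq_ltn_trans hb.
by rewrite divnMDl // modnMDl divn_small // modn_small // addn0.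
Qed.

Lemma big_ord_blocks (F : nat -> R) :
  \sum_(p < Nt * Ns) F p = \sum_(m < Nt) \sum_(b < Ns) F (m * Ns + b)%N.
Proof.
elim: Nt => [|N IH]; first by rewrite mul0n !big_ord0.
rewrite big_ord_recr /= -IH -!(big_mkord xpredT) mulSnr.
rewrite (big_cat_nat _ (leq_addr Ns (N * Ns))) //=; congr (_ + _).
rewrite -{1}[(N * Ns)%N]add0n big_addn addKn big_mkord.
by apply: eq_bigr => i _; rewrite addnC.
Qed.

Lemma blk_vget (x0 : 'cV[R]_Ns) (w : 'cV[R]_(Nt * Ns)) m a : (a < Ns)%N ->
  vget (blk x0 w m.+1) a = vget w (m * Ns + a).
Proof. by move=> ha; rewrite /blk (vget_col (fun i => vget w (m * Ns + i))). Qed.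

Lemma blkB (x0 : 'cV[R]_Ns) (u v : 'cV[R]_(Nt * Ns)) m :
  blk x0 (u - v) m.+1 = blk x0 u m.+1 - blk x0 v m.+1.
Proof. by apply/colP => a; rewrite !mxE vgetB. Qed.

Lemma norm2_sqr_blocks (x0 : 'cV[R]_Ns) (u : 'cV[R]_(Nt * Ns)) :
  norm2 u ^+ 2 = \sum_(m < Nt) norm2 (blk x0 u m.+1) ^+ 2.
Proof.
have sqr_sum n (v : 'cV[R]_n) : norm2 v ^+ 2 = \sum_(i < n) vget v i ^+ 2.
  rewrite sqr_sqrtr ?sumr_ge0 // => [|i _]; last exact: sqr_ge0.
  by apply: eq_bigr => i _; rewrite vgetE.
rewrite sqr_sum (big_ord_blocks (fun p => vget u p ^+ 2)).
by apply: eq_bigr => m _; rewrite sqr_sum; apply: eq_bigr => a _; rewrite blk_vget.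
Qed.

Definition stackf (f : 'cV[R]_Ns -> R -> 'cV[R]_Ns) (dt : R) (x0 : 'cV[R]_Ns)
    (w : 'cV[R]_(Nt * Ns)) : 'cV[R]_(Nt * Ns) :=
  \col_(p < Nt * Ns) vget (f (blk x0 w (p %/ Ns).+1) ((p %/ Ns).+1%:R * dt)) (p %% Ns).

Lemma stackf_vget f dt (x0 : 'cV[R]_Ns) (w : 'cV[R]_(Nt * Ns)) m a :
  (m < Nt)%N -> (a < Ns)%N ->
  vget (stackf f dt x0 w) (m * Ns + a) = vget (f (blk x0 w m.+1) (m.+1%:R * dt)) a.
Proof.
move=> hm ha; have [divE modE] := divn_modn_block m ha.
rewrite (vget_col (fun p => vget (f (blk x0 w (p %/ Ns).+1) ((p %/ Ns).+1%:R * dt))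
                                (p %% Ns))); last by nia.
by rewrite divE modE.
Qed.

Lemma blk_stackf f dt (x0 : 'cV[R]_Ns) (w : 'cV[R]_(Nt * Ns)) m : (m < Nt)%N ->
  blk x0 (stackf f dt x0 w) m.+1 = f (blk x0 w m.+1) (m.+1%:R * dt).
Proof. by move=> hm; apply/colP => a; rewrite mxE stackf_vget // vgetE. Qed.

Lemma stackf_lipschitz f (T dt Lf : R) (x0 : 'cV[R]_Ns) (u v : 'cV[R]_(Nt * Ns)) :
  0 < T -> dt = T / Nt%:R -> 0 <= Lf ->
  (forall w y t, 0 <= t <= T -> norm2 (f w t - f y t) <= Lf * norm2 (w - y)) ->
  norm2 (stackf f dt x0 u - stackf f dt x0 v) <= Lf * norm2 (u - v).
Proof.
move=> T_gt0 dtE Lf_ge0 f_lip.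
rewrite -(ler_pXn2r (_ : 0 < 2)%N) ?nnegrE ?mulr_ge0 ?norm2_ge0 //.
rewrite exprMn !(norm2_sqr_blocks x0) mulr_sumr; apply: ler_sum => m _.
have hm := ltn_ord m.
rewrite !blkB !blk_stackf // -exprMn ler_pXn2r ?nnegrE ?mulr_ge0 ?norm2_ge0 //.
apply: f_lip; rewrite dtE; apply/andP; split.
  by rewrite mulr_ge0 ?ler0n // divr_ge0 ?ler0n // ltW.
by rewrite mulrA ler_pdivrMr ?ltr0n ?(leq_ltn_trans _ hm) // mulrC ler_pM2l // ler_nat.
Qed.

End Blocks.

Lemma big_ord_leq_rev (V : zmodType) N m (G : nat -> V) : (m < N)%N ->
  \sum_(i < N) (if (i <= m)%N then G i else 0) = \sum_(j < m.+1) G (m - j)%N.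
Proof.
move=> hm; rewrite -big_mkcond /= -(big_ord_widen _ G hm).
by rewrite (reindex_inj rev_ord_inj); apply: eq_bigr => j _; rewrite /= subSS.
Qed.

Section MultistepResidual.
Variables (R : rcfType) (Ns Nt : nat).

Lemma LMmat_mulmx_vget_blocks k (c : nat -> nat -> R) (e : 'cV[R]_(Nt * Ns)) m a :
  (m < Nt)%N -> (a < Ns)%N ->
  vget (LMmat Ns Nt k c *m e) (m * Ns + a) =
  \sum_(i < Nt) (if ((i <= m) && (m - i <= k m.+1))%N then
                   c m.+1 (m - i)%N * vget e (i * Ns + a) else 0).
Proof.
move=> hm ha; have hp : (m * Ns + a < Nt * Ns)%N by nia.
have [divE modE] := divn_modn_block m ha.
rewrite -[(m * Ns + a)%N]/(nat_of_ord (Ordinal hp)) vgetE mxE.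
pose F q := (if [&& a == q %% Ns, (q %/ Ns).+1 <= m.+1 & m.+1 - (q %/ Ns).+1 <= k m.+1]%N
             then c m.+1 (m.+1 - (q %/ Ns).+1)%N else 0) * vget e q.
transitivity (\sum_(q < Nt * Ns) F q).
  by apply: eq_bigr => q _; rewrite mxE /= divE modE /F vgetE.
rewrite big_ord_blocks; apply: eq_bigr => i _.
have [divE' modE'] := divn_modn_block i ha.
rewrite (bigD1 (Ordinal ha)) //= big1 ?addr0 => [|b /eqP neq_ba].
  by rewrite /F divE' modE' eqxx /= ltnS subSS; case: ifP; rewrite ?mul0r.
rewrite /F; have [-> ->] := divn_modn_block i (ltn_ord b).
case: eqP => [eq_ab|]; last by rewrite mul0r.
by case: neq_ba; apply: val_inj; rewrite /= eq_ab.
Qed.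

Lemma LMmat_mulmx_vget k (c : nat -> nat -> R) (e : 'cV[R]_(Nt * Ns)) m a :
  (m < Nt)%N -> (a < Ns)%N ->
  vget (LMmat Ns Nt k c *m e) (m * Ns + a) =
  \sum_(j < m.+1) (if (j <= k m.+1)%N then
                     c m.+1 j * vget e ((m - j) * Ns + a) else 0).
Proof.
move=> hm ha; rewrite LMmat_mulmx_vget_blocks //.
under eq_bigr do rewrite if_and.
rewrite (big_ord_leq_rev (fun i => if (m - i <= k m.+1)%N then
                         c m.+1 (m - i)%N * vget e (i * Ns + a) else 0) hm).
by apply: eq_bigr => j _; rewrite subKn // -ltnS.
Qed.

Lemma resid_vgetB f dt k (alpha beta : nat -> nat -> R) (x0 : 'cV[R]_Ns)
    (u v : 'cV[R]_(Nt * Ns)) m a :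
  (m < Nt)%N -> (a < Ns)%N -> (k m.+1 <= m.+1)%N ->
  vget (resid f dt k alpha beta x0 u m.+1) a
    - vget (resid f dt k alpha beta x0 v m.+1) a =
  \sum_(j < m.+1) (if (j <= k m.+1)%N then
     alpha m.+1 j * vget (u - v) ((m - j) * Ns + a)
     - dt * beta m.+1 j
       * vget (stackf f dt x0 u - stackf f dt x0 v) ((m - j) * Ns + a)
     else 0).
Proof.
move=> hm ha hk; rewrite /resid !vget_sum -sumrB.
pose term (y : 'cV[R]_(Nt * Ns)) j := vget (alpha m.+1 j *: blk x0 y (m.+1 - j)
  - (dt * beta m.+1 j) *: f (blk x0 y (m.+1 - j)) ((m.+1 - j)%:R * dt)) a.
rewrite (big_ord_widen m.+2 (fun j => term u j - term v j)) //.
rewrite big_mkcond big_ord_recr /=.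
(* the step j = m + 1 only involves the initial state x0, common to u and v *)
rewrite /term subnn subrr if_same addr0; apply: eq_bigr => j _.
rewrite ltnS; case: ifP => // _.
have hj : (m - j < Nt)%N by apply: leq_ltn_trans (leq_subr _ _) hm.
have -> : (m.+1 - j = (m - j).+1)%N by rewrite subSn // -ltnS.
by rewrite !vgetB !vgetZ !blk_vget // !stackf_vget //; ring.
Qed.

Lemma rbarB f dt k (alpha beta : nat -> nat -> R) (x0 : 'cV[R]_Ns)
    (u v : 'cV[R]_(Nt * Ns)) :
  (forall n, (1 <= n <= Nt)%N -> (k n <= n)%N) ->
  rbar f dt k alpha beta x0 u - rbar f dt k alpha beta x0 v =
  LMmat Ns Nt k alpha *m (u - v)
  - dt *: (LMmat Ns Nt k beta *m (stackf f dt x0 u - stackf f dt x0 v)).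
Proof.
move=> k_le; apply/colP => p.
have /andP [_ Ns_gt0] : ((0 < Nt) && (0 < Ns))%N.
  by rewrite -muln_gt0 (leq_ltn_trans _ (ltn_ord p)).
have ha : (p %% Ns < Ns)%N by rewrite ltn_mod.
have hm : (p %/ Ns < Nt)%N by rewrite ltn_divLR.
have LM_at (c : nat -> nat -> R) (e : 'cV[R]_(Nt * Ns)) :
    \sum_j LMmat Ns Nt k c p j * e j 0 =
    vget (LMmat Ns Nt k c *m e) (p %/ Ns * Ns + p %% Ns).
  by rewrite -divn_eq vgetE mxE.
have subE (a b : 'cV[R]_(Nt * Ns)) : (a - b) p 0 = a p 0 - b p 0 by rewrite !mxE.
rewrite !subE !mxE resid_vgetB ?k_le //.
rewrite !LM_at !LMmat_mulmx_vget // mulr_sumr -sumrB; apply: eq_bigr => j _.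
by case: ifP => _; [ring | rewrite mulr0 subr0].
Qed.

End MultistepResidual.

Section PerturbedLinearBounds.
Variables (R : rcfType) (n z : nat) (A B : 'M[R]_n) (M : 'M[R]_(z, n)).
Variables (dt Lf : R) (e g : 'cV[R]_n).
Hypotheses (dt_ge0 : 0 <= dt) (g_le : norm2 g <= Lf * norm2 e).

Lemma norm2_perturbed_ge sA sB : is_sigma_min A sA -> is_sigma_max B sB ->
  (sA - dt * Lf * sB) * norm2 e <= norm2 (A *m e - dt *: (B *m g)).
Proof.
move=> sigA sigB; have sB_ge0 : 0 <= sB by case: sigB.
apply: le_trans (lerB_norm2_dist _ _); rewrite norm2Z ger0_norm //.
have Ae_ge := norm2_mulmx_ge e sigA.
have Bg_le : norm2 (B *m g) <= sB * (Lf * norm2 e).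
  by apply: le_trans (norm2_mulmx_le g sigB) _; rewrite ler_wpM2l.
have := ler_wpM2l dt_ge0 Bg_le; lra.
Qed.

Lemma norm2_perturbed_le sMA sMB : is_sigma_max (M *m A) sMA ->
  is_sigma_max (M *m B) sMB ->
  norm2 (M *m (A *m e - dt *: (B *m g))) <= (sMA + dt * Lf * sMB) * norm2 e.
Proof.
move=> sigMA sigMB; have sMB_ge0 : 0 <= sMB by case: sigMB.
rewrite mulmxBr -scalemxAr !mulmxA; apply: le_trans (ler_norm2D _ _) _.
rewrite norm2N norm2Z ger0_norm //.
have MAe_le := norm2_mulmx_le e sigMA.
have MBg_le : norm2 (M *m B *m g) <= sMB * (Lf * norm2 e).
  by apply: le_trans (norm2_mulmx_le g sigMB) _; rewrite ler_wpM2l.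
have := ler_wpM2l dt_ge0 MBg_le; lra.
Qed.

End PerturbedLinearBounds.

Theorem mainTheorem3 (R : rcfType) (Ns Nt nst zb : nat)
  (T dt : R) (f : 'cV[R]_Ns -> R -> 'cV[R]_Ns) (x0 : 'cV[R]_Ns)
  (k : nat -> nat) (alpha beta : nat -> nat -> R)
  (Pi : 'M[R]_(Nt * Ns, nst)) (Abar : 'M[R]_(zb, Nt * Ns))
  (Lf P sA sB sAA sAB : R) (x xt wst : 'cV[R]_(Nt * Ns)) :
  (0 < Ns)%N -> (0 < Nt)%N -> 0 < T -> dt = T / Nt%:R ->
  (forall n, (1 <= n <= Nt)%N -> (k n <= n)%N /\ alpha n 0%N != 0) ->
  is_sigma_min (LMmat Ns Nt k alpha) sA ->
  is_sigma_max (LMmat Ns Nt k beta) sB ->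
  is_sigma_max (Abar *m LMmat Ns Nt k alpha) sAA ->
  is_sigma_max (Abar *m LMmat Ns Nt k beta) sAB ->
  (* (i) Lipschitz continuity *)
  0 < Lf ->
  (forall w y t, 0 <= t <= T -> norm2 (f w t - f y t) <= Lf * norm2 (w - y)) ->
  (* (ii) time-step restriction: dt < sA / (Lf sB) *)
  dt * Lf * sB < sA ->
  (* (iii) *)
  0 < P ->
  (forall w, inS x0 Pi w ->
     P * norm2 (rbar f dt k alpha beta x0 w) <= norm2 (Abar *m rbar f dt k alpha beta x0 w)) ->
  (* full-order solution *)
  rbar f dt k alpha beta x0 x = 0 ->
  (* ST-LSPG solution *)
  inS x0 Pi xt ->
  (forall w, inS x0 Pi w ->
     norm2 (Abar *m rbar f dt k alpha beta x0 xt) <= norm2 (Abar *m rbar f dt k alpha beta x0 w)) ->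
  (* best approximation of x in S, realizing min_{w in S} ||x - w|| *)
  inS x0 Pi wst ->
  (forall w, inS x0 Pi w -> norm2 (x - wst) <= norm2 (x - w)) ->
  norm2 (x - xt) <=
    P^-1 * ((sAA + dt * Lf * sAB) / (sA - dt * Lf * sB)) * norm2 (x - wst).
Proof.
move=> _ _ T_gt0 dtE k_alpha sigA sigB sigAA sigAB Lf_gt0 f_lip dt_small P_gt0
  P_stable rx0 xt_in xt_min wst_in _.
have dt_ge0 : 0 <= dt by rewrite dtE divr_ge0 ?ler0n ?ltW.
have rE y : rbar f dt k alpha beta x0 y =
            - (rbar f dt k alpha beta x0 x - rbar f dt k alpha beta x0 y).
  by rewrite rx0 sub0r opprK.
have stack_lip y := stackf_lipschitz x0 x y T_gt0 dtE (ltW Lf_gt0) f_lip.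
have rB y := rbarB f dt alpha beta x0 x y (fun n hn => (k_alpha n hn).1).
have lower : (sA - dt * Lf * sB) * norm2 (x - xt) <= norm2 (rbar f dt k alpha beta x0 xt).
  by rewrite rE norm2N rB; apply: norm2_perturbed_ge.
have upper : norm2 (Abar *m rbar f dt k alpha beta x0 wst) <=
              (sAA + dt * Lf * sAB) * norm2 (x - wst).
  by rewrite rE mulmxN norm2N rB; apply: norm2_perturbed_le.
have gap_gt0 : 0 < sA - dt * Lf * sB by rewrite subr_gt0.
have -> : P^-1 * ((sAA + dt * Lf * sAB) / (sA - dt * Lf * sB)) * norm2 (x - wst) =
          (sAA + dt * Lf * sAB) * norm2 (x - wst) / (P * (sA - dt * Lf * sB)).
  by field; rewrite !gt_eqF.
rewrite ler_pdivlMr ?mulr_gt0 //; apply: le_trans upper.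
apply: le_trans (xt_min _ wst_in); apply: le_trans (P_stable _ xt_in).
by rewrite mulrA [_ * P]mulrC -[P * _ * _]mulrA ler_pM2l // mulrC.
Qed.
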